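(* Let $M$ be a compact translating soliton with boundary in $\mathbb{H}^2\times\mathbb{R}$. Then the height function of $M$ cannot attain a local maximum at any interior point of $M$.
   Context: $\mathbb{H}^2\times\mathbb{R}$ carries the product metric $\langle\cdot,\cdot\rangle$ of the hyperbolic plane of curvature $-1$ and the real line; the height function is the projection onto $\mathbb{R}$ and $\partial_z$ its gradient. An oriented immersed surface $M$ with unit normal $\eta$ and mean curvature $H_M$ (half the trace of the second fundamental form with respect to $\eta$) is a translating soliton if $H_M=\langle\eta,\partial_z\rangle$ at every point. *)

From Stdlib Require Import Reals.
From Coquelicot Require Import Coquelicot.
Open Scope R_scope.

(* ---------- Model of H^2 x R ----------
   H^2 is the upper half-plane {(a,b) | b > 0} with metric (da^2+db^2)/b^2
   (curvature -1); the R factor has coordinate c (the height). *)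
Definition vec := (R * R * R)%type.
Definition v1 (w : vec) : R := fst (fst w).
Definition v2 (w : vec) : R := snd (fst w).
Definition v3 (w : vec) : R := snd w.

Definition gmet (p u w : vec) : R :=
  (v1 u * v1 w + v2 u * v2 w) / (v2 p ^ 2) + v3 u * v3 w.

(* Christoffel term Gamma(p)(u,w) of the Levi-Civita connection of H^2 x R:
   Gamma^a_{ab}=Gamma^a_{ba}=-1/b, Gamma^b_{aa}=1/b, Gamma^b_{bb}=-1/b,
   all others zero. *)
Definition christ (p u w : vec) : vec :=
  (( - (v1 u * v2 w + v2 u * v1 w) / v2 p,
     (v1 u * v1 w - v2 u * v2 w) / v2 p),
   0).

Definition dz : vec := (0, 0, 1).

Definition pd1 (f : R -> R -> R) (u v : R) : R := Derive (fun s => f s v) u.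
Definition pd2 (f : R -> R -> R) (u v : R) : R := Derive (fun t => f u t) v.

Definition open2 (U : R -> R -> Prop) : Prop :=
  forall u v, U u v -> exists r, 0 < r /\
    forall u' v', Rabs (u' - u) < r -> Rabs (v' - v) < r -> U u' v'.

Definition cont2 (f : R -> R -> R) (u v : R) : Prop :=
  forall eps, 0 < eps -> exists d, 0 < d /\
    forall u' v', Rabs (u' - u) < d -> Rabs (v' - v) < d ->
      Rabs (f u' v' - f u v) < eps.

Definition has_partials (f : R -> R -> R) (u v : R) : Prop :=
  ex_derive (fun s => f s v) u /\ ex_derive (fun t => f u t) v.

Definition C2_on (U : R -> R -> Prop) (f : R -> R -> R) : Prop :=
  forall u v, U u v ->
    has_partials f u v /\ has_partials (pd1 f) u v /\ has_partials (pd2 f) u v /\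
    cont2 f u v /\ cont2 (pd1 f) u v /\ cont2 (pd2 f) u v /\
    cont2 (pd1 (pd1 f)) u v /\ cont2 (pd2 (pd1 f)) u v /\
    cont2 (pd1 (pd2 f)) u v /\ cont2 (pd2 (pd2 f)) u v.

Definition comp1 (X : R -> R -> vec) : R -> R -> R := fun u v => v1 (X u v).
Definition comp2 (X : R -> R -> vec) : R -> R -> R := fun u v => v2 (X u v).
Definition comp3 (X : R -> R -> vec) : R -> R -> R := fun u v => v3 (X u v).

Definition vpd1 (X : R -> R -> vec) (u v : R) : vec :=
  (pd1 (comp1 X) u v, pd1 (comp2 X) u v, pd1 (comp3 X) u v).
Definition vpd2 (X : R -> R -> vec) (u v : R) : vec :=
  (pd2 (comp1 X) u v, pd2 (comp2 X) u v, pd2 (comp3 X) u v).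

Definition vadd (u w : vec) : vec := (v1 u + v1 w, v2 u + v2 w, v3 u + v3 w).

Definition immersion_on (U : R -> R -> Prop) (X : R -> R -> vec) : Prop :=
  C2_on U (comp1 X) /\ C2_on U (comp2 X) /\ C2_on U (comp3 X) /\
  (forall u v, U u v -> 0 < v2 (X u v)) /\
  (forall u v, U u v ->
     let a := vpd1 X u v in let b := vpd2 X u v in
     (v2 a * v3 b - v3 a * v2 b, v3 a * v1 b - v1 a * v3 b,
      v1 a * v2 b - v2 a * v1 b) <> (0, 0, 0)).

Definition unit_normal_on (U : R -> R -> Prop) (X N : R -> R -> vec) : Prop :=
  forall u v, U u v ->
    gmet (X u v) (N u v) (N u v) = 1 /\
    gmet (X u v) (N u v) (vpd1 X u v) = 0 /\
    gmet (X u v) (N u v) (vpd2 X u v) = 0 /\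
    cont2 (comp1 N) u v /\ cont2 (comp2 N) u v /\ cont2 (comp3 N) u v.

Definition cov (X : R -> R -> vec) (Xij Xi Xj : vec) (p : vec) : vec :=
  vadd Xij (christ p Xi Xj).

(* mean curvature = half the trace of the second fundamental form
   h_ij = < nabla_{X_i} X_j , N > with respect to the induced metric *)
Definition mean_curv (X N : R -> R -> vec) (u v : R) : R :=
  let p := X u v in
  let Xu := vpd1 X u v in let Xv := vpd2 X u v in
  let Xuu := vpd1 (vpd1 X) u v in
  let Xuv := vpd2 (vpd1 X) u v in
  let Xvv := vpd2 (vpd2 X) u v in
  let n := N u v in
  let E := gmet p Xu Xu in let F := gmet p Xu Xv in let G := gmet p Xv Xv in
  let e := gmet p (cov X Xuu Xu Xu p) n in
  let f := gmet p (cov X Xuv Xu Xv p) n in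
  let g := gmet p (cov X Xvv Xv Xv p) n in
  (G * e - 2 * F * f + E * g) / (2 * (E * G - F * F)).

Definition translating_soliton_on (U : R -> R -> Prop) (X N : R -> R -> vec) : Prop :=
  immersion_on U X /\ unit_normal_on U X N /\
  forall u v, U u v -> mean_curv X N u v = gmet (X u v) (N u v) dz.

Definition height_local_max (U : R -> R -> Prop) (X : R -> R -> vec) (u0 v0 : R) : Prop :=
  exists r, 0 < r /\ forall u v, U u v -> Rabs (u - u0) < r -> Rabs (v - v0) < r ->
    v3 (X u v) <= v3 (X u0 v0).

From Stdlib Require Import Reals Lra.
From Coquelicot Require Import Coquelicot.
Open Scope R_scope.

(* At an interior local maximum of the height z, both partial derivatives of z
   vanish, so the tangent plane is horizontal and the unit normal is +-d/dz; the
   soliton equation then reads H = +-1.  The Christoffel symbols of H^2 x R have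
   no vertical component, so at that point the second fundamental form is
   +-Hess z, and the equation forces tr_g Hess z = 2 > 0.  But Hess z is negative
   semidefinite at a local maximum and the induced metric g is positive definite,
   so tr_g Hess z <= 0. *)

Lemma local_max_derive_eq0 (f : R -> R) (x l r : R) :
  0 < r -> (forall y, Rabs (y - x) < r -> f y <= f x) ->
  derivable_pt_lim f x l -> l = 0.
Proof.
  intros Hr Hmax Hl.
  change l with (derive_pt f x (exist _ l Hl)).
  apply (deriv_maximum f (x - r) (x + r)); [lra | lra |].
  intros y Hy1 Hy2. apply Hmax, Rabs_def1; lra.
Qed.

Lemma derivable_pt_lim_pos_right (g : R -> R) (x m : R) :
  derivable_pt_lim g x m -> 0 < m ->
  exists d, 0 < d /\ forall h, 0 < h < d -> g x < g (x + h).
Proof.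
  intros Hg Hm. destruct (Hg m Hm) as [d Hd].
  exists d. split; [apply cond_pos |]. intros h Hh.
  assert (Hq := Hd h ltac:(lra) ltac:(rewrite Rabs_right; lra)).
  apply Rabs_def2 in Hq.
  set (q := (g (x + h) - g x) / h) in Hq.
  assert (g (x + h) - g x = q * h) by (unfold q; field; lra).
  nra.
Qed.

Lemma local_max_second_derive_nonpos (f g : R -> R) (x m r : R) :
  0 < r -> (forall y, Rabs (y - x) < r -> f y <= f x) ->
  (forall y, Rabs (y - x) < r -> derivable_pt_lim f y (g y)) ->
  derivable_pt_lim g x m -> m <= 0.
Proof.
  intros Hr Hmax Hf Hg.
  assert (Hgx : g x = 0).
  { apply (local_max_derive_eq0 f x _ r Hr Hmax), Hf.
    rewrite Rminus_diag, Rabs_R0; exact Hr. }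
  apply Rnot_lt_le; intro Hm.
  destruct (derivable_pt_lim_pos_right g x m Hg Hm) as [d [Hd Hpos]].
  set (h := Rmin d r / 2).
  assert (Hh : 0 < h < d /\ h < r).
  { assert (Rmin d r <= d) by apply Rmin_l. assert (Rmin d r <= r) by apply Rmin_r.
    assert (0 < Rmin d r) by (apply Rmin_glb_lt; lra). unfold h; lra. }
  destruct (MVT_cor2 f g x (x + h)) as [c [Hfc Hc]]; [lra | |].
  { intros c Hc. apply Hf, Rabs_def1; lra. }
  assert (Hgc : 0 < g c).
  { rewrite <- Hgx. replace c with (x + (c - x)) by ring. apply Hpos; lra. }
  assert (Hfh := Hmax (x + h) ltac:(apply Rabs_def1; lra)).
  nra.
Qed.

Lemma derivable_pt_lim_lincomb (f g : R -> R) (x a b lf lg : R) :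
  derivable_pt_lim f x lf -> derivable_pt_lim g x lg ->
  derivable_pt_lim (fun t => f t * a + g t * b) x (lf * a + lg * b).
Proof.
  intros Hf Hg. apply is_derive_Reals in Hf, Hg. apply is_derive_Reals.
  exact (is_derive_plus _ _ x _ _ (is_derive_scal_l f x lf a Hf)
                                  (is_derive_scal_l g x lg b Hg)).
Qed.

Lemma cont2_continuity_2d_pt (f : R -> R -> R) (x y : R) :
  cont2 f x y -> continuity_2d_pt f x y.
Proof.
  intros Hf eps. destruct (Hf eps (cond_pos eps)) as [d [Hd Hfd]].
  exists (mkposreal d Hd). exact Hfd.
Qed.

Lemma differentiable_pt_lim_continuous_partials
    (U : R -> R -> Prop) (f : R -> R -> R) (x y : R) :
  open2 U -> (forall u v, U u v -> has_partials f u v) -> U x y ->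
  cont2 (pd1 f) x y -> cont2 (pd2 f) x y ->
  differentiable_pt_lim f x y (pd1 f x y) (pd2 f x y).
Proof.
  intros HU Hf Hxy C1 C2 [eps Heps]; simpl.
  destruct (HU x y Hxy) as [d0 [Hd0 HUd]].
  destruct (C1 (eps / 2) ltac:(lra)) as [d1 [Hd1 H1]].
  destruct (C2 (eps / 2) ltac:(lra)) as [d2 [Hd2 H2]].
  set (d := Rmin d0 (Rmin d1 d2)).
  assert (Hd : 0 < d) by (repeat apply Rmin_glb_lt; lra).
  assert (d <= d0) by apply Rmin_l.
  assert (d <= d1 /\ d <= d2) as [? ?].
  { assert (d <= Rmin d1 d2) by apply Rmin_r.
    split; eapply Rle_trans; eauto; [apply Rmin_l | apply Rmin_r]. }
  exists (mkposreal d Hd); simpl. intros u v Hu Hv.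
  destruct (MVT_cor4 (fun s => f s v) (fun s => pd1 f s v) x (Rabs (u - x)))
    with (b := u) as [c1 [Hc1 Hc1x]]; [| lra |].
  { intros c Hc. apply Derive_correct, (Hf c v), HUd; lra. }
  destruct (MVT_cor4 (fun t => f x t) (fun t => pd2 f x t) y (Rabs (v - y)))
    with (b := v) as [c2 [Hc2 Hc2y]]; [| lra |].
  { intros c Hc. apply Derive_correct, (Hf x c), HUd; [rewrite Rminus_diag, Rabs_R0 |]; lra. }
  replace (f u v - f x y - (pd1 f x y * (u - x) + pd2 f x y * (v - y)))
    with ((pd1 f c1 v - pd1 f x y) * (u - x) + (pd2 f x c2 - pd2 f x y) * (v - y))
    by lra.
  assert (E1 : Rabs (pd1 f c1 v - pd1 f x y) < eps / 2) by (apply H1; lra).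
  assert (E2 : Rabs (pd2 f x c2 - pd2 f x y) < eps / 2).
  { apply H2; [rewrite Rminus_diag, Rabs_R0 |]; lra. }
  eapply Rle_trans; [apply Rabs_triang |]. rewrite !Rabs_mult.
  assert (Rabs (u - x) <= Rmax (Rabs (u - x)) (Rabs (v - y))) by apply Rmax_l.
  assert (Rabs (v - y) <= Rmax (Rabs (u - x)) (Rabs (v - y))) by apply Rmax_r.
  assert (0 <= Rabs (u - x)) by apply Rabs_pos.
  assert (0 <= Rabs (v - y)) by apply Rabs_pos.
  nra.
Qed.

Definition along (f : R -> R -> R) (u0 v0 a b t : R) : R := f (u0 + a * t) (v0 + b * t).

Lemma along_0 (f : R -> R -> R) (u0 v0 a b : R) : along f u0 v0 a b 0 = f u0 v0.
Proof. unfold along. rewrite !Rmult_0_r, !Rplus_0_r. reflexivity. Qed.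

Definition C1_on (U : R -> R -> Prop) (f : R -> R -> R) : Prop :=
  forall u v, U u v -> has_partials f u v /\ cont2 (pd1 f) u v /\ cont2 (pd2 f) u v.

Lemma C2_on_C1_on (U : R -> R -> Prop) (f : R -> R -> R) :
  C2_on U f -> C1_on U f /\ C1_on U (pd1 f) /\ C1_on U (pd2 f).
Proof.
  intros Hf. split; [| split]; intros u v Huv;
    destruct (Hf u v Huv) as (? & ? & ? & _ & ? & ? & ? & ? & ? & ?); tauto.
Qed.

Lemma derivable_pt_lim_along (U : R -> R -> Prop) (f : R -> R -> R) (u0 v0 a b t : R) :
  open2 U -> C1_on U f -> U (u0 + a * t) (v0 + b * t) ->
  derivable_pt_lim (along f u0 v0 a b) t
    (along (pd1 f) u0 v0 a b t * a + along (pd2 f) u0 v0 a b t * b).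
Proof.
  intros HU Hf Ht. destruct (Hf _ _ Ht) as (_ & C1 & C2).
  apply (derivable_pt_lim_comp_2d f (fun s => u0 + a * s) (fun s => v0 + b * s)).
  - apply (differentiable_pt_lim_continuous_partials U); auto.
    intros u v Huv. apply (Hf u v Huv).
  - apply is_derive_Reals. auto_derive; [exact I | ring].
  - apply is_derive_Reals. auto_derive; [exact I | ring].
Qed.

Lemma C2_on_Schwarz (U : R -> R -> Prop) (f : R -> R -> R) (x y : R) :
  open2 U -> C2_on U f -> U x y -> pd1 (pd2 f) x y = pd2 (pd1 f) x y.
Proof.
  intros HU Hf Hxy. destruct (HU x y Hxy) as [r [Hr HUr]].
  destruct (Hf x y Hxy) as (_ & _ & _ & _ & _ & _ & _ & C21 & C12 & _).
  apply Schwarz.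
  - exists (mkposreal r Hr). intros u v Hu Hv.
    destruct (Hf u v (HUr u v Hu Hv)) as ([? ?] & [_ ?] & [? _] & _).
    repeat split; assumption.
  - exact (cont2_continuity_2d_pt _ _ _ C12).
  - exact (cont2_continuity_2d_pt _ _ _ C21).
Qed.

Definition local_max2 (U : R -> R -> Prop) (f : R -> R -> R) (u0 v0 : R) : Prop :=
  exists r, 0 < r /\ forall u v, U u v -> Rabs (u - u0) < r -> Rabs (v - v0) < r ->
    f u v <= f u0 v0.

Lemma local_max_along (U : R -> R -> Prop) (f : R -> R -> R) (u0 v0 a b : R) :
  open2 U -> U u0 v0 -> local_max2 U f u0 v0 ->
  exists r, 0 < r /\ forall t, Rabs (t - 0) < r ->
    U (u0 + a * t) (v0 + b * t) /\ along f u0 v0 a b t <= along f u0 v0 a b 0.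
Proof.
  intros HU H0 [r1 [Hr1 Hmax]]. destruct (HU u0 v0 H0) as [r0 [Hr0 HUr]].
  set (m := Rmin r0 r1).
  assert (Hm : 0 < m) by (apply Rmin_glb_lt; lra).
  assert (m <= r0) by apply Rmin_l. assert (m <= r1) by apply Rmin_r.
  assert (Hab : 0 < 1 + Rabs a + Rabs b) by (generalize (Rabs_pos a) (Rabs_pos b); lra).
  exists (m / (1 + Rabs a + Rabs b)). split; [apply Rdiv_lt_0_compat; lra |].
  intros t Ht. rewrite Rminus_0_r in Ht.
  assert (Hmt : Rabs t * (1 + Rabs a + Rabs b) < m).
  { apply Rmult_lt_reg_r with (/ (1 + Rabs a + Rabs b)); [apply Rinv_0_lt_compat; lra |].
    rewrite Rmult_assoc, Rinv_r; lra. }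
  assert (Hu : Rabs (u0 + a * t - u0) < m).
  { replace (u0 + a * t - u0) with (a * t) by ring. rewrite Rabs_mult.
    generalize (Rabs_pos a) (Rabs_pos b) (Rabs_pos t). nra. }
  assert (Hv : Rabs (v0 + b * t - v0) < m).
  { replace (v0 + b * t - v0) with (b * t) by ring. rewrite Rabs_mult.
    generalize (Rabs_pos a) (Rabs_pos b) (Rabs_pos t). nra. }
  assert (Ht' : U (u0 + a * t) (v0 + b * t)) by (apply HUr; lra).
  split; [exact Ht' |]. rewrite along_0. apply Hmax; [exact Ht' | lra | lra].
Qed.

Lemma local_max_partials_eq0 (U : R -> R -> Prop) (f : R -> R -> R) (u0 v0 : R) :
  open2 U -> C1_on U f -> U u0 v0 -> local_max2 U f u0 v0 ->
  pd1 f u0 v0 = 0 /\ pd2 f u0 v0 = 0.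
Proof.
  intros HU Hf H0 Hmax.
  assert (Hdir : forall a b, pd1 f u0 v0 * a + pd2 f u0 v0 * b = 0).
  { intros a b. destruct (local_max_along U f u0 v0 a b HU H0 Hmax) as [r [Hr Hline]].
    rewrite <- (along_0 (pd1 f) u0 v0 a b), <- (along_0 (pd2 f) u0 v0 a b).
    apply (local_max_derive_eq0 (along f u0 v0 a b) 0 _ r Hr); [apply Hline |].
    apply (derivable_pt_lim_along U); [exact HU | exact Hf |].
    rewrite !Rmult_0_r, !Rplus_0_r. exact H0. }
  split; [generalize (Hdir 1 0) | generalize (Hdir 0 1)]; lra.
Qed.

Lemma local_max_hessian_nonpos (U : R -> R -> Prop) (f : R -> R -> R) (u0 v0 : R) :
  open2 U -> C2_on U f -> U u0 v0 -> local_max2 U f u0 v0 ->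
  forall a b, a ^ 2 * pd1 (pd1 f) u0 v0 + 2 * a * b * pd2 (pd1 f) u0 v0
              + b ^ 2 * pd2 (pd2 f) u0 v0 <= 0.
Proof.
  intros HU Hf H0 Hmax a b.
  destruct (C2_on_C1_on U f Hf) as (Hf0 & Hf1 & Hf2).
  destruct (local_max_along U f u0 v0 a b HU H0 Hmax) as [r [Hr Hline]].
  set (df t := along (pd1 f) u0 v0 a b t * a + along (pd2 f) u0 v0 a b t * b).
  apply (local_max_second_derive_nonpos (along f u0 v0 a b) df 0 _ r Hr).
  - intros t Ht. apply Hline, Ht.
  - intros t Ht. apply (derivable_pt_lim_along U); [exact HU | exact Hf0 | apply Hline, Ht].
  - assert (H00 : U (u0 + a * 0) (v0 + b * 0)) by (rewrite !Rmult_0_r, !Rplus_0_r; exact H0).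
    assert (D1 := derivable_pt_lim_along U (pd1 f) u0 v0 a b 0 HU Hf1 H00).
    assert (D2 := derivable_pt_lim_along U (pd2 f) u0 v0 a b 0 HU Hf2 H00).
    rewrite !along_0 in D1, D2.
    replace (a ^ 2 * pd1 (pd1 f) u0 v0 + 2 * a * b * pd2 (pd1 f) u0 v0
             + b ^ 2 * pd2 (pd2 f) u0 v0)
      with ((pd1 (pd1 f) u0 v0 * a + pd2 (pd1 f) u0 v0 * b) * a
            + (pd1 (pd2 f) u0 v0 * a + pd2 (pd2 f) u0 v0 * b) * b)
      by (rewrite (C2_on_Schwarz U f u0 v0 HU Hf H0); ring).
    apply derivable_pt_lim_lincomb; assumption.
Qed.

Definition cross (a b : vec) : vec :=
  (v2 a * v3 b - v3 a * v2 b, v3 a * v1 b - v1 a * v3 b, v1 a * v2 b - v2 a * v1 b).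

Definition gram_det (p a b : vec) : R :=
  gmet p a a * gmet p b b - gmet p a b * gmet p a b.

(* [(E G - F^2) tr_g h] for the metric [E, F, G] induced on the span of [a], [b]. *)
Definition hess_trace (p a b : vec) (huu huv hvv : R) : R :=
  gmet p b b * huu - 2 * gmet p a b * huv + gmet p a a * hvv.

Lemma gmet_self_nonneg (p w : vec) : 0 < v2 p -> 0 <= gmet p w w.
Proof.
  intros Hp. unfold gmet.
  apply Rplus_le_le_0_compat; [apply Rdiv_le_0_compat |]; nra.
Qed.

Lemma gram_det_pos (p a b : vec) : 0 < v2 p -> cross a b <> (0, 0, 0) -> 0 < gram_det p a b.
Proof.
  intros Hp Hab.
  set (K := v2 p ^ 2).
  assert (HK : 0 < K) by (unfold K; nra).
  assert (Hlagrange : gram_det p a b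
    = v3 (cross a b) ^ 2 / K ^ 2 + (v1 (cross a b) ^ 2 + v2 (cross a b) ^ 2) / K).
  { unfold gram_det, gmet, cross, K, v1, v2, v3 in *; simpl. field. lra. }
  rewrite Hlagrange.
  destruct (cross a b) as [[c1 c2] c3]; unfold v1, v2, v3; cbn [fst snd].
  assert (Hc : 0 < c1 ^ 2 + c2 ^ 2 + c3 ^ 2).
  { destruct (Req_dec c1 0) as [-> |]; [destruct (Req_dec c2 0) as [-> |];
      [destruct (Req_dec c3 0) as [-> |] |] |]; try (exfalso; apply Hab; reflexivity); nra. }
  assert (0 < (c3 ^ 2 + (c1 ^ 2 + c2 ^ 2) * K) / K ^ 2).
  { apply Rdiv_lt_0_compat; nra. }
  replace (c3 ^ 2 / K ^ 2 + (c1 ^ 2 + c2 ^ 2) / K)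
    with ((c3 ^ 2 + (c1 ^ 2 + c2 ^ 2) * K) / K ^ 2) by (field; lra).
  assumption.
Qed.

Lemma trace_nonpos_of_nsd_pd (E F G huu huv hvv : R) :
  0 <= G -> 0 < E * G - F * F ->
  (forall a b, a ^ 2 * huu + 2 * a * b * huv + b ^ 2 * hvv <= 0) ->
  G * huu - 2 * F * huv + E * hvv <= 0.
Proof.
  intros HG Hdet Hnsd.
  assert (HG' : 0 < G).
  { destruct HG as [HG | <-]; [exact HG |]. nra. }
  assert (H1 := Hnsd G (- F)). assert (H2 := Hnsd 0 1).
  assert (Hid : G * (G * huu - 2 * F * huv + E * hvv)
                = (G ^ 2 * huu + 2 * G * - F * huv + (- F) ^ 2 * hvv)
                  + (E * G - F * F) * (0 ^ 2 * huu + 2 * 0 * 1 * huv + 1 ^ 2 * hvv))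
    by ring.
  apply (Rmult_le_reg_l G); [exact HG' |].
  rewrite Rmult_0_r, Hid. nra.
Qed.

Lemma unit_normal_of_horizontal_tangents (p n a b : vec) :
  0 < v2 p -> v3 a = 0 -> v3 b = 0 -> cross a b <> (0, 0, 0) ->
  gmet p n n = 1 -> gmet p n a = 0 -> gmet p n b = 0 ->
  n = (0, 0, v3 n) /\ v3 n * v3 n = 1.
Proof.
  destruct p as [[p1 p2] p3], n as [[n1 n2] n3], a as [[a1 a2] a3], b as [[b1 b2] b3].
  unfold cross, gmet, v1, v2, v3; cbn [fst snd].
  intros Hp -> -> Hab Hnn Hna Hnb.
  assert (HD : a1 * b2 - a2 * b1 <> 0).
  { intros HD. apply Hab. rewrite HD. repeat f_equal; ring. }
  assert (Ha : n1 * a1 + n2 * a2 = 0).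
  { replace (n1 * a1 + n2 * a2) with (((n1 * a1 + n2 * a2) / p2 ^ 2 + n3 * 0) * p2 ^ 2)
      by (field; lra).
    rewrite Hna; ring. }
  assert (Hb : n1 * b1 + n2 * b2 = 0).
  { replace (n1 * b1 + n2 * b2) with (((n1 * b1 + n2 * b2) / p2 ^ 2 + n3 * 0) * p2 ^ 2)
      by (field; lra).
    rewrite Hnb; ring. }
  assert (Hn1 : n1 = 0).
  { apply (Rmult_eq_reg_r (a1 * b2 - a2 * b1)); [| exact HD].
    transitivity (b2 * (n1 * a1 + n2 * a2) - a2 * (n1 * b1 + n2 * b2)); [ring |].
    rewrite Ha, Hb; ring. }
  assert (Hn2 : n2 = 0).
  { apply (Rmult_eq_reg_r (a1 * b2 - a2 * b1)); [| exact HD].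
    transitivity (a1 * (n1 * b1 + n2 * b2) - b1 * (n1 * a1 + n2 * a2)); [ring |].
    rewrite Ha, Hb; ring. }
  subst n1 n2. split; [reflexivity |].
  rewrite <- Hnn. field. lra.
Qed.

Lemma gmet_vertical (p w : vec) (s : R) : gmet p w (0, 0, s) = v3 w * s.
Proof. unfold gmet, v1, v2, v3; cbn [fst snd]. unfold Rdiv; ring. Qed.

Lemma v3_cov (X : R -> R -> vec) (w a b p : vec) : v3 (cov X w a b p) = v3 w.
Proof. unfold cov, vadd, christ, v3; cbn [fst snd]. ring. Qed.

Lemma mean_curv_vertical_normal (X N : R -> R -> vec) (u v s : R) :
  N u v = (0, 0, s) ->
  mean_curv X N u v
  = s * hess_trace (X u v) (vpd1 X u v) (vpd2 X u v)
          (pd1 (pd1 (comp3 X)) u v) (pd2 (pd1 (comp3 X)) u v) (pd2 (pd2 (comp3 X)) u v)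
      / (2 * gram_det (X u v) (vpd1 X u v) (vpd2 X u v)).
Proof.
  intros HN. unfold mean_curv. rewrite HN, !gmet_vertical, !v3_cov.
  change (v3 (vpd1 (vpd1 X) u v)) with (pd1 (pd1 (comp3 X)) u v).
  change (v3 (vpd2 (vpd1 X) u v)) with (pd2 (pd1 (comp3 X)) u v).
  change (v3 (vpd2 (vpd2 X) u v)) with (pd2 (pd2 (comp3 X)) u v).
  unfold hess_trace, gram_det, Rdiv. ring.
Qed.

Lemma hess_trace_at_horizontal_point (U : R -> R -> Prop) (X N : R -> R -> vec) (u v : R) :
  translating_soliton_on U X N -> U u v ->
  pd1 (comp3 X) u v = 0 -> pd2 (comp3 X) u v = 0 ->
  hess_trace (X u v) (vpd1 X u v) (vpd2 X u v)
    (pd1 (pd1 (comp3 X)) u v) (pd2 (pd1 (comp3 X)) u v) (pd2 (pd2 (comp3 X)) u v)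
  = 2 * gram_det (X u v) (vpd1 X u v) (vpd2 X u v).
Proof.
  intros [[_ [_ [_ [Hpos Hcross]]]] [Hunit Hsol]] Huv Hzu Hzv.
  destruct (Hunit u v Huv) as (Hnn & Hna & Hnb & _).
  destruct (unit_normal_of_horizontal_tangents (X u v) (N u v) (vpd1 X u v) (vpd2 X u v)
              (Hpos u v Huv) Hzu Hzv (Hcross u v Huv) Hnn Hna Hnb) as [HN Hs].
  assert (HD := gram_det_pos _ _ _ (Hpos u v Huv) (Hcross u v Huv)).
  specialize (Hsol u v Huv).
  set (s := v3 (N u v)) in HN, Hs.
  rewrite (mean_curv_vertical_normal X N u v s HN), HN in Hsol.
  unfold dz in Hsol. rewrite gmet_vertical in Hsol. cbn [v3 snd] in Hsol.
  set (T := hess_trace _ _ _ _ _ _) in *. set (D := gram_det _ _ _) in *.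
  assert (HT : s * s * T = s * s * (2 * D)).
  { replace (s * s * T) with (s * (s * T / (2 * D)) * (2 * D)) by (field; lra).
    rewrite Hsol. ring. }
  rewrite Hs, !Rmult_1_l in HT. exact HT.
Qed.

Theorem proposition5p3 (U : R -> R -> Prop) (X N : R -> R -> vec) :
  open2 U -> translating_soliton_on U X N ->
  forall u0 v0, U u0 v0 -> ~ height_local_max U X u0 v0.
Proof.
  intros HU Hsol u0 v0 H0 Hmax.
  pose proof Hsol as [[_ [_ [Hz [Hpos Hcross]]]] _].
  change (local_max2 U (comp3 X) u0 v0) in Hmax.
  destruct (local_max_partials_eq0 U (comp3 X) u0 v0 HU (proj1 (C2_on_C1_on U _ Hz)) H0 Hmax)
    as [Hzu Hzv].
  assert (Htrace := hess_trace_at_horizontal_point U X N u0 v0 Hsol H0 Hzu Hzv).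
  assert (Hdet := gram_det_pos _ _ _ (Hpos u0 v0 H0) (Hcross u0 v0 H0)).
  assert (Hnonpos := trace_nonpos_of_nsd_pd _ _ _ _ _ _
                       (gmet_self_nonneg _ (vpd2 X u0 v0) (Hpos u0 v0 H0)) Hdet
                       (local_max_hessian_nonpos U (comp3 X) u0 v0 HU Hz H0 Hmax)).
  unfold hess_trace, gram_det in *. lra.
Qed.
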